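(* Let $(G,\mathcal{A})$ be a local convergence pairing on $X$, and let $B,A_1,\dots,A_m\in\mathcal{A}$ be a crossing sequence. Let $(f_i)\subset G$ act as a convergence sequence on $B$ with attractor $p$ and repeller $n$. If for all $1\le j\le m$ we have $n\notin A_j$ and $f_i^{-1}(p)\notin A_j$ for all $i$, then $f_i(A_j)\to p$ for all $1\le j\le m$.
   Context: $X$ is a Peano continuum (compact, connected, locally connected metric space) without cut points and $G$ acts on $X$ by homeomorphisms; $\mathcal{A}$ is a $G$-invariant collection of closed subsets of $X$. For a closed set $S\subset X$ and connected $B,C\subset X\setminus S$, $S$ separates $B$ from $C$ if they lie in different components of $X\setminus S$; $S$ separates $Y$ if it separates two points of $Y$. Closed sets $A,B$ cross if $A\cap B\neq\emptyset$ or ($A$ separates $B$ and $B$ separates $A$). A crossing sequence is a sequence $A_1,\dots,A_n$ with $A_i$ crossing $A_{i+1}$ for $1\le i<n$. For $S\subset X$ and $p\in X$, $g_i(S)\to p$ means every neighborhood of $p$ contains $g_i(S)$ for all large $i$. A sequence $(g_i)$ of homeomorphisms of a space $Y$ is a convergence sequence on $Y$ with repeller $n$ and attractor $p$ if $g_i(C)\to p$ for every compact $C\subset Y\setminus\{n\}$; a sequence in $G$ acting as a convergence sequence on $A\in\mathcal{A}$ means its elements preserve $A$ and their restrictions form a convergence sequence on $A$. A group acts as a convergence group on $Y$ if every sequence of distinct elements has a subsequence that is a convergence sequence on $Y$. $(G,\mathcal{A})$ is a local convergence pairing on $X$ if: (1) $|A|>2$ for all $A\in\mathcal{A}$; (2)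 for each $\epsilon>0$ only finitely many $A\in\mathcal{A}$ have diameter $>\epsilon$; (3) for any $x,y\in X$ some finite $\mathcal{B}\subset\mathcal{A}$ has $\bigcup\mathcal{B}$ separating $x$ from $y$; (4) each stabilizer $\mathrm{Stab}(A)=\{g: g(A)=A\}$ acts as a convergence group on $A$; (5) for any $A,B\in\mathcal{A}$ with $|A\cap B|\le 2$: if $A\cap B=\{c\}$ then for any $b\in B\setminus\{c\}$ there is a finite crossing sequence $A,A_1,\dots,A_n,B$ in $\mathcal{A}$ with $\{b,c\}\cap A_i=\emptyset$ for $1\le i\le n$; if $|A\cap B|\ne1$ there is a crossing sequence $A,A_1,\dots,A_n,B$ in $\mathcal{A}$ with $(A\cap B)\cap A_i=\emptyset$ for $1\le i\le n$. *)

From HB Require Import structures.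
From mathcomp Require Import all_boot all_order all_algebra.
From mathcomp Require Import all_classical all_reals all_analysis.
From Stdlib Require List.
Set Implicit Arguments. Unset Strict Implicit. Unset Printing Implicit Defensive.
Import Order.TTheory GRing.Theory Num.Theory.
Local Open Scope classical_set_scope.
Local Open Scope ring_scope.

Section Continuum.
Context {R : realType} (X : metricType R).

Definition locally_connected_space : Prop :=
  forall (x : X) (U : set X), nbhs x U ->
    exists V : set X, [/\ open V, connected V, V x & V `<=` U].

Definition peano_continuum : Prop :=
  [/\ [set: X] !=set0, compact [set: X], connected [set: X]
    & locally_connected_space].

Definition cut_point (x : X) : Prop := ~ connected (~` [set x]).

Definition no_cut_points : Prop := forall x : X, ~ cut_point x.

End Continuum.

(* An abstract (possibly infinite) group G, given by its operations and
   (left) group axioms, acting on X; each element acts continuously, hence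
   (by the action axioms) by a homeomorphism. *)
Record group_action (G : Type) (X : topologicalType) := GroupAction {
  gmul : G -> G -> G;
  ginv : G -> G;
  gone : G;
  gmulA : forall a b c, gmul a (gmul b c) = gmul (gmul a b) c;
  gmul1 : forall a, gmul gone a = a;
  gmulV : forall a, gmul (ginv a) a = gone;
  act : G -> X -> X;
  act1 : forall x, act gone x = x;
  actM : forall g h x, act (gmul g h) x = act g (act h x);
  act_cont : forall g, continuous (act g) }.

Section Pairing.
Context {R : realType} (X : metricType R) (G : Type) (GA : group_action G X).

Local Notation act := (act GA).
Local Notation ginv := (ginv GA).

Definition separates (S : set X) (x y : X) : Prop :=
  [/\ ~ S x, ~ S y & ~ connected_component (~` S) x y].

Definition separates_set (S Y : set X) : Prop :=
  exists x y, [/\ Y x, Y y & separates S x y].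

Definition crosses (A B : set X) : Prop :=
  (A `&` B !=set0) \/ (separates_set A B /\ separates_set B A).

(* crossing_chain A [:: A1; ...; Ak] : A, A1, ..., Ak is a crossing sequence *)
Fixpoint crossing_chain (A : set X) (s : seq (set X)) : Prop :=
  match s with
  | [::] => True
  | B :: s' => crosses A B /\ crossing_chain B s'
  end.

Definition conv_to (g : nat -> X -> X) (S : set X) (p : X) : Prop :=
  forall U : set X, nbhs p U ->
    exists N : nat, forall i : nat, (N <= i)%N -> g i @` S `<=` U.

Definition convergence_seq (Y : set X) (g : nat -> X -> X) (n p : X) : Prop :=
  [/\ Y n, Y p &
      forall C : set X, compact C -> C `<=` Y `\ n -> conv_to g C p].

Definition acts_as_convergence_seq (A : set X) (f : nat -> G) (n p : X) : Prop :=
  (forall i, act (f i) @` A = A) /\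
  convergence_seq A (fun i => act (f i)) n p.

Definition stab (A : set X) (g : G) : Prop := act g @` A = A.

Definition stab_convergence_group (A : set X) : Prop :=
  forall f : nat -> G, injective f -> (forall i, stab A (f i)) ->
    exists phi : nat -> nat, (forall i, (phi i < phi i.+1)%N) /\
      exists n p, convergence_seq A (fun i => act (f (phi i))) n p.

Definition diam_gt (A : set X) (eps : R) : Prop :=
  exists x y, [/\ A x, A y & eps < mdist x y].

Definition card_le2 (S : set X) : Prop := exists a b : X, S `<=` [set a; b].

Definition local_convergence_pairing (calA : set (set X)) : Prop :=
  [/\
      (forall A, calA A -> exists a b c : X,
          [/\ A a, A b, A c & [/\ a <> b, a <> c & b <> c]]),
      (forall eps : R, 0 < eps -> finite_set [set A | calA A /\ diam_gt A eps]),
      (forall x y : X, x <> y -> exists calB : set (set X),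
          [/\ finite_set calB, calB `<=` calA &
              separates (\bigcup_(B in calB) B) x y]),
      (forall A, calA A -> stab_convergence_group A) &
      (forall A B, calA A -> calA B -> card_le2 (A `&` B) ->
        (forall c, A `&` B = [set c] ->
          forall b, B b -> b <> c ->
            exists s : seq (set X), [/\ s <> [::], (forall Ai, List.In Ai s -> calA Ai),
              crossing_chain A (rcons s B) &
              (forall Ai, List.In Ai s -> ~ Ai b /\ ~ Ai c)]) /\
        ((~ exists c, A `&` B = [set c]) ->
            exists s : seq (set X), [/\ s <> [::], (forall Ai, List.In Ai s -> calA Ai),
              crossing_chain A (rcons s B) &
              (forall Ai, List.In Ai s -> Ai `&` (A `&` B) = set0)]))].

End Pairing.

From HB Require Import structures.
From mathcomp Require Import all_boot all_order all_algebra.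
From mathcomp Require Import all_classical all_reals all_analysis.
From mathcomp Require Import lra.
From Stdlib Require List.
(* Follow the crossing chain one link at a time.  Suppose A' crosses a set A
   whose relevant points are pushed to p by the f i: the points of B other
   than n, or all points of an earlier A_j.  Then f i (A') comes arbitrarily
   close to p, because either A' contains such a point or A' separates two of
   them, and then f i (A') must meet every connected neighbourhood of p that
   contains both images.  For A = B, a separated point equal to n is first
   replaced by a point of B in its component of X \ A'; one exists since n is
   not isolated in B.  Finally f i (A') never contains p and only finitely
   many members of calA are large, so f i (A') is eventually small, and being
   close to p it converges to p. *)

Set Implicit Arguments. Unset Strict Implicit. Unset Printing Implicit Defensive.
Import Order.TTheory GRing.Theory Num.Theory.
Local Open Scope classical_set_scope.
Local Open Scope ring_scope.

Lemma near_finite_set {T : Type} {I : choiceType} (F : set_system T) (D : set I)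
    (P : I -> set T) :
  Filter F -> finite_set D -> (forall i, D i -> \forall x \near F, P i x) ->
  \forall x \near F, forall i, D i -> P i x.
Proof.
move=> FF /finite_fsetP[E ->] DP.
apply: filterS (filter_bigI (f := P) FF (fun i iE => DP i iE)) => x PE i iE.
exact: PE.
Qed.

Section Topology.
Context {R : realType} {X : metricType R}.

Definition approaches (S : nat -> set X) (p : X) : Prop :=
  forall U, nbhs p U -> \forall i \near \oo, S i `&` U !=set0.

Lemma approaches_of_pt (g : nat -> X -> X) (A : set X) (x p : X) :
  A x -> g^~ x @ \oo --> p -> approaches (fun i => g i @` A) p.
Proof.
move=> Ax gx U Up; near=> i; exists (g i x); split; first by exists x.
by near: i; exact: gx.
Unshelve. all: by end_near.
Qed.

Lemma conv_to_pt (g : nat -> X -> X) (A : set X) (x p : X) :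
  conv_to g A p -> A x -> g^~ x @ \oo --> p.
Proof.
move=> gA Ax U /gA[N gAU]; exists N => // i /gAU; apply.
by exists x.
Qed.

Lemma convergence_seq_pt (Y : set X) (g : nat -> X -> X) (n p x : X) :
  convergence_seq Y g n p -> Y x -> x <> n -> g^~ x @ \oo --> p.
Proof.
move=> [_ _ gY] Yx xn; apply: (conv_to_pt (A := [set x])) => //.
by apply: gY; [exact: compact_set1 | move=> _ ->].
Qed.

Lemma separates_connected_meets (A V : set X) (a b : X) :
  separates A a b -> connected V -> V a -> V b -> V `&` A !=set0.
Proof.
move=> [_ _ nab] cV Va Vb; apply: contrapT => VA; apply: nab.
by exists V => //; split => // z Vz Az; apply: VA; exists z.
Qed.

Lemma separates_component (A : set X) (x x' y y' : X) :
  connected_component (~` A) x x' -> connected_component (~` A) y y' ->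
  separates A x y -> separates A x' y'.
Proof.
move=> xx' yy' [_ _ nxy]; split; [exact: connected_component_sub xx'|
  exact: connected_component_sub yy'|] => x'y'; apply: nxy.
apply: connected_component_trans xx' _; apply: connected_component_trans x'y' _.
exact: connected_component_sym.
Qed.

Lemma conv_to_of_approaches (calA : set (set X)) (g : nat -> X -> X)
    (A : set X) (p : X) :
  (forall C, calA C -> closed C) ->
  (forall eps, 0 < eps -> finite_set [set C | calA C /\ diam_gt C eps]) ->
  (forall i, calA (g i @` A)) -> (forall i, ~ (g i @` A) p) ->
  approaches (fun i => g i @` A) p -> conv_to g A p.
Proof.
move=> clA nullA gAA gAp gAnear U /nbhs_ballP[r /= r0 prU].
have r20 : 0 < r / 2 by rewrite divr_gt0.
have not_big : \forall i \near \oo,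
    forall C, calA C /\ diam_gt C (r / 2) -> g i @` A <> C.
  apply: (near_finite_set (P := fun C i => g i @` A <> C) _ (nullA _ r20)).
  move=> C [AC _]; have [Cp|nCp] := pselect (C p).
    by apply: nearW => i gAC; apply: (gAp i); rewrite gAC.
  have : nbhs p (~` C).
    by apply: open_nbhs_nbhs; split; rewrite ?openC; [exact: clA|].
  by move/gAnear; apply: filterS => i [z [gAz nCz]] gAC; apply: nCz; rewrite -gAC.
suff: \forall i \near \oo, g i @` A `<=` U by case=> N _ gAU; exists N.
near=> i.
have gA_small : forall C, calA C /\ diam_gt C (r / 2) -> g i @` A <> C.
  by near: i; exact: not_big.
have [z [gAz pz]] : (g i @` A) `&` ball p (r / 2) !=set0.
  by near: i; apply: gAnear; exact: nbhsx_ballx.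
move=> y gAy; apply: prU; rewrite ballEmdist /=.
have zy : mdist z y <= r / 2.
  rewrite leNgt; apply/negP => ryz.
  by apply: (gA_small _ _ erefl); split; [exact: gAA | exists z, y].
move: pz; rewrite ballEmdist /= => pz.
have := metric_triangle p z y; lra.
Unshelve. all: by end_near.
Qed.

(* Were n isolated in B, the compact set B \ {n} would be pushed to p while
   g i permutes B, so every point of B other than p would eventually be g i n. *)
Lemma repeller_limit_point (B : set X) (g : nat -> X -> X) (n p : X) :
  compact [set: X] -> closed B ->
  (exists a b c, [/\ B a, B b, B c & [/\ a <> b, a <> c & b <> c]]) ->
  (forall i, g i @` B = B) -> convergence_seq B g n p -> limit_point B n.
Proof.
move=> cX clB [a [b [c [Ba Bb Bc [ab ac bc]]]]] gB [_ _ gconv] U nU.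
apply: contrapT => isolated.
pose K := B `&` ~` U°.
have BK x : B x -> x <> n -> K x.
  move=> Bx xn; split=> // /interior_subset Ux; apply: isolated.
  by exists x; split=> //; apply/eqP.
have gK : conv_to g K p.
  apply: gconv => [|x [Bx Ux]]; last by split=> // xn; apply: Ux; rewrite xn.
  apply: subclosed_compact cX (subsetT _).
  by apply: closedI clB _; rewrite closedC; exact: open_interior.
have image_n w : B w -> w <> p -> \forall i \near \oo, w = g i n.
  move=> Bw wp; have pw : 0 < mdist p w by rewrite mdist_gt0; apply/eqP => /esym.
  have [N gKp] := gK _ (nbhsx_ballx p _ pw); exists N => // i Ni.
  have [x Bx gxw] : (g i @` B) w by rewrite gB.
  have [xn|xn] := pselect (x = n); first by rewrite -gxw xn.
  have := gKp i Ni w (ex_intro2 _ _ x (BK x Bx xn) gxw).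
  by rewrite ballEmdist /= ltxx.
have [u [v [Bu Bv [uv up vp]]]] :
    exists u v, [/\ B u, B v & [/\ u <> v, u <> p & v <> p]].
  have [ap|ap] := pselect (a = p).
    by exists b, c; split=> //; split=> // ?; congruence.
  have [bp|bp] := pselect (b = p).
    by exists a, c; split=> //; split=> // ?; congruence.
  by exists a, b.
have [N _ /(_ N (leqnn N))[uN vN]] :=
  filterI (image_n u Bu up) (image_n v Bv vp).
by apply: uv; rewrite uN vN.
Qed.

Lemma crossing_chain_ind (P : set X -> Prop) (B : set X) (s : seq (set X)) :
  (forall A, List.In A s -> crosses B A -> P A) ->
  (forall A A', List.In A' s -> P A -> crosses A A' -> P A') ->
  crossing_chain B s -> forall A, List.In A s -> P A.
Proof.
elim: s B => [|A s IH] B base step //= [BA chain].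
have PA : P A by apply: base => //; left.
move=> A' [<-|sA'] //; apply: (IH A) => // [A'' sA'' AA''|A1 A2 sA2].
  by apply: (step A) => //; right.
by apply: step; right.
Qed.

End Topology.

Section Action.
Context {R : realType} (X : metricType R) (G : Type) (GA : group_action G X).

Local Notation act := (act GA).
Local Notation ginv := (ginv GA).

Lemma gmulgV (g : G) : gmul GA g (ginv g) = gone GA.
Proof.
(* g g^-1 = (g^-1)^-1 g^-1 g g^-1 = (g^-1)^-1 g^-1 = 1 *)
set h := ginv g; set k := ginv h.
rewrite -[gmul GA g h](gmul1 GA) -{1}(gmulV GA h) -/k.
rewrite -(gmulA GA k h (gmul GA g h)) (gmulA GA h g h) (gmulV GA g) (gmul1 GA).
exact: gmulV.
Qed.

Lemma act_ginvK (g : G) : cancel (act g) (act (ginv g)).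
Proof. by move=> x; rewrite -actM gmulV act1. Qed.

Lemma act_ginvKV (g : G) : cancel (act (ginv g)) (act g).
Proof. by move=> x; rewrite -actM gmulgV act1. Qed.

Lemma approaches_of_separates (f : nat -> G) (A : set X) (a b p : X) :
  locally_connected_space X -> separates A a b ->
  (fun i => act (f i) a) @ \oo --> p -> (fun i => act (f i) b) @ \oo --> p ->
  approaches (fun i => act (f i) @` A) p.
Proof.
move=> hlc sab fa fb U /hlc[V [oV cV Vp VU]].
have nV : nbhs p V by apply: open_nbhs_nbhs.
near=> i.
have [_ [[y Vy <-] Ay]] : (act (ginv (f i)) @` V) `&` A !=set0.
  apply: separates_connected_meets sab _ _ _.
  - apply: connected_continuous_connected cV _.
    exact/continuous_subspaceT/act_cont.
  - by exists (act (f i) a); [near: i; exact: fa | exact: act_ginvK].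
  - by exists (act (f i) b); [near: i; exact: fb | exact: act_ginvK].
exists y; split; last exact: VU.
by exists (act (ginv (f i)) y); rewrite ?act_ginvKV.
Unshelve. all: by end_near.
Qed.

Lemma approaches_of_crosses_conv_to (f : nat -> G) (A A' : set X) (p : X) :
  locally_connected_space X -> conv_to (fun i => act (f i)) A p -> crosses A A' ->
  approaches (fun i => act (f i) @` A') p.
Proof.
move=> hlc fA [[x [Ax A'x]]|[_ [a [b [Aa Ab sab]]]]].
  exact: approaches_of_pt A'x (conv_to_pt fA Ax).
exact: approaches_of_separates hlc sab (conv_to_pt fA Aa) (conv_to_pt fA Ab).
Qed.

Lemma approaches_of_crosses_convergence (f : nat -> G) (B A : set X) (n p : X) :
  locally_connected_space X -> acts_as_convergence_seq GA B f n p ->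
  limit_point B n -> closed A -> ~ A n -> crosses B A ->
  approaches (fun i => act (f i) @` A) p.
Proof.
move=> hlc [_ fB] lpB clA An [[x [Bx Ax]]|[_ [b1 [b2 [Bb1 Bb2 sep]]]]].
  have xn : x <> n by move=> xn; apply: An; rewrite -xn.
  exact: approaches_of_pt Ax (convergence_seq_pt fB Bx xn).
have [V [oV cV Vn VA]] : exists V, [/\ open V, connected V, V n & V `<=` ~` A].
  by apply: hlc; apply: open_nbhs_nbhs; split=> //; rewrite openC.
have off_n x : B x -> ~ A x ->
    exists x', [/\ B x', x' <> n & connected_component (~` A) x x'].
  move=> Bx Ax; have [->|xn] := pselect (x = n); last first.
    by exists x; split=> //; exact: connected_component_refl.
  have [b [/eqP bn Bb Vb]] := lpB V (open_nbhs_nbhs (conj oV Vn)).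
  by exists b; split=> //; exists V.
have [nAb1 nAb2 _] := sep.
have [a1 [Ba1 a1n b1a1]] := off_n b1 Bb1 nAb1.
have [a2 [Ba2 a2n b2a2]] := off_n b2 Bb2 nAb2.
by apply: approaches_of_separates hlc (separates_component b1a1 b2a2 sep) _ _;
  apply: convergence_seq_pt fB _ _.
Qed.

End Action.

Theorem lemma4p5 (R : realType) (X : metricType R)
    (hX : peano_continuum X) (hcut : no_cut_points X)
    (G : Type) (GA : group_action G X) (calA : set (set X))
    (hclosed : forall A, calA A -> closed A)
    (hinv : forall (g : G) A, calA A -> calA (act GA g @` A))
    (hpair : local_convergence_pairing GA calA)
    (B : set X) (As : seq (set X))
    (hB : calA B) (hAs : forall Aj, List.In Aj As -> calA Aj)
    (hchain : crossing_chain B As)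
    (f : nat -> G) (n p : X)
    (hf : acts_as_convergence_seq GA B f n p)
    (havoid : forall Aj, List.In Aj As ->
       ~ Aj n /\ forall i, ~ Aj (act GA (ginv GA (f i)) p)) :
  forall Aj, List.In Aj As -> conv_to (fun i => act GA (f i)) Aj p.
Proof.
(* Only compactness and local connectedness of X and axioms (1) and (2) of
   the pairing are used. *)
move: hX hpair => [_ cX _ hlc] [three null _ _ _].
have lpB : limit_point B n.
  exact: repeller_limit_point cX (hclosed B hB) (three B hB) hf.1 hf.2.
have conv_of_approaches A : calA A ->
    (forall i, ~ A (act GA (ginv GA (f i)) p)) ->
    approaches (fun i => act GA (f i) @` A) p ->
    conv_to (fun i => act GA (f i)) A p.
  move=> AA Ap.
  apply: conv_to_of_approaches hclosed null (fun i => hinv _ _ AA) _.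
  by move=> i [x Ax fx]; apply: (Ap i); rewrite -fx act_ginvK.
apply: crossing_chain_ind hchain => [A sA BA|A A' sA' fA AA'].
  have [An Ap] := havoid A sA; apply: conv_of_approaches (hAs A sA) Ap _.
  have clA := hclosed A (hAs A sA).
  exact: approaches_of_crosses_convergence hlc hf lpB clA An BA.
have [_ Ap] := havoid A' sA'; apply: conv_of_approaches (hAs A' sA') Ap _.
exact: approaches_of_crosses_conv_to hlc fA AA'.
Qed.
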